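(* Let $P=\forall x_1,\dots,x_n\,\exists y_1(D_1),\dots,y_k(D_k)$ be a prefix, let $G_{\mathrm{syn}}$ be an admissible group w.r.t. $P$, and let $G_{\mathrm{sem}}$ be its associated group. Let $\sigma\in\mathcal A(X)$, $f\in G_{\mathrm{sem}}$, $s\in\mathcal S(P)$ and $i\in\{1,\dots,k\}$ be such that (1) for all $j\in\{1,\dots,k\}$ with $j<i$ or $D_i\not\subseteq D_j$, we have $[y_j]_{\tau_s}=[y_j]_{\tau_{f(s)}}$ for all $\tau\in\mathcal A(X)$ with $\tau|_{D_i}=\sigma|_{D_i}$; (2) for all $g\in G_{\mathrm{syn}}$ and all $\tau\in\mathcal A(X)$, if $\tau|_{D_i}=\sigma|_{D_i}$ then $g(\tau)|_{D_i}=\tau|_{D_i}$. Then there exists an interpretation $s'\in\mathcal S(P)$ such that for every $j\in\{1,\dots,k\}$ and every $\tau\in\mathcal A(X)$: $[y_j]_{\tau_{s'}}=[y_j]_{\tau_s}$ if $j<i$, or if $j\ge i$ and $\tau|_{D_i}\neq\sigma|_{D_i}$; and $[y_j]_{\tau_{s'}}=[y_j]_{\tau_{f(s)}}$ if $j\ge i$ and $\tau|_{D_i}=\sigma|_{D_i}$. Furthermore, there exists $h\in G_{\mathrm{sem}}$ with $h(s)=s'$.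
   Context: $X=\{x_1,\dots,x_n\}$, $Y=\{y_1,\dots,y_k\}$ are finite disjoint sets of propositional variables; $\operatorname{BF}(V)$ the propositional formulas over $V\subseteq X\cup Y$; $\mathcal A(V)$ the assignments $V\to\{\top,\bot\}$; $[\phi]_\sigma$ the truth value; $D_j\subseteq X$. For $\rho\in\mathcal A(X)$ and $D\subseteq X$, $\rho|_D$ is the restriction of $\rho$ to $D$. An interpretation is $s=(s_1,\dots,s_k)$ with $s_j:\{\top,\bot\}^{|D_j|}\to\{\top,\bot\}$; $\mathcal S(P)$ the set of interpretations. For $\tau\in\mathcal A(X)$, $\tau_s\in\mathcal A(X\cup Y)$ equals $\tau$ on $X$ and $\tau_s(y_j)=s_j$ evaluated at $\tau$'s values on $D_j$. For $g:\operatorname{BF}(V)\to\operatorname{BF}(V)$ and $\rho\in\mathcal A(V)$, $g(\rho)(v)=[g(v)]_\rho$; $g$ preserves propositional satisfiability if $[g(\phi)]_\rho=[\phi]_{g(\rho)}$ always. A formula in $\operatorname{BF}(Y)$ depends on $x_i$ if it contains some $y_j$ with $x_i\in D_j$. A bijection $g$ of $\operatorname{BF}(X\cup Y)$ is admissible w.r.t. $P$ if it preserves propositional satisfiability, $g(x_i)\in\operatorname{BF}(X)$, $g(y_j)\in\operatorname{BF}(Y)$, and if $g(y_j)$ depends on $x_i$ then $g^{-1}(x_i)\in\operatorname{BF}(D_j)$. An admissible group is a subgroup of all admissible functions. For admissible $g$ and $\tau\in\mathcal A(X)$, $g(\tau)\in\mathcal A(X)$ is $g(\tau)(x)=[g(x)]_\tau$.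 The associated group of $G_{\mathrm{syn}}$ is the set of all bijections $f:\mathcal S(P)\to\mathcal S(P)$ such that for every $s\in\mathcal S(P)$ and $\tau\in\mathcal A(X)$ there exists $g\in G_{\mathrm{syn}}$ with $g(\tau)_{f(s)}=g(\tau_s)$. *)

From mathcomp Require Import all_boot.
Set Implicit Arguments. Unset Strict Implicit. Unset Printing Implicit Defensive.

Section Defs.
Variables (n k : nat).

(* variables X ∪ Y : x_i = inl i, y_j = inr j *)
Definition var := ('I_n + 'I_k)%type.

Inductive form : Type :=
| FVar of var
| FTop
| FBot
| FNot of form
| FAnd of form & form
| FOr of form & form.

Fixpoint eval (rho : var -> bool) (phi : form) : bool :=
  match phi with
  | FVar v => rho v
  | FTop => true
  | FBot => false
  | FNot a => ~~ eval rho a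
  | FAnd a b => eval rho a && eval rho b
  | FOr a b => eval rho a || eval rho b
  end.

(* phi ∈ BF(V) for V given by a predicate on variables *)
Fixpoint vars_in (V : var -> bool) (phi : form) : bool :=
  match phi with
  | FVar v => V v
  | FTop | FBot => true
  | FNot a => vars_in V a
  | FAnd a b | FOr a b => vars_in V a && vars_in V b
  end.

Definition isX (v : var) : bool := if v is inl _ then true else false.
Definition isY (v : var) : bool := if v is inr _ then true else false.
Definition inD (A : {set 'I_n}) (v : var) : bool :=
  if v is inl x then x \in A else false.

Variable D : 'I_k -> {set 'I_n}.

(* a formula in BF(Y) depends on x_i if it contains some y_j with x_i ∈ D_j *)
Definition depends (phi : form) (i : 'I_n) : bool :=
  ~~ vars_in (fun v => if v is inr j then i \notin D j else true) phi.

Definition act_asg (g : form -> form) (rho : var -> bool) : var -> bool :=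
  fun v => eval rho (g (FVar v)).

Definition preserves_sat (g : form -> form) : Prop :=
  forall phi rho, eval rho (g phi) = eval (act_asg g rho) phi.

Definition admissible (g : form -> form) : Prop :=
  [/\ bijective g, preserves_sat g,
      (forall i : 'I_n, vars_in isX (g (FVar (inl i)))),
      (forall j : 'I_k, vars_in isY (g (FVar (inr j)))) &
      (forall (i : 'I_n) (j : 'I_k), depends (g (FVar (inr j))) i ->
         forall phi, g phi = FVar (inl i) -> vars_in (inD (D j)) phi)].

Definition admissible_group (G : (form -> form) -> Prop) : Prop :=
  [/\ (forall g, G g -> admissible g),
      G id,
      (forall g1 g2, G g1 -> G g2 -> G (g1 \o g2)) &
      (forall g, G g -> exists2 g', G g' & cancel g g' /\ cancel g' g)].

(* interpretations: s_j : {⊤,⊥}^{D_j} -> {⊤,⊥} *)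
Definition dom (j : 'I_k) := {x : 'I_n | x \in D j}.
Definition interp := forall j : 'I_k, {ffun {ffun dom j -> bool} -> bool}.

Definition restr (tau : 'I_n -> bool) (j : 'I_k) : {ffun dom j -> bool} :=
  [ffun x => tau (val x)].

Definition ext (tau : 'I_n -> bool) (s : interp) : var -> bool :=
  fun v => match v with inl x => tau x | inr j => s j (restr tau j) end.

(* evaluation of a formula (in BF(X)) under tau ∈ A(X); the values given
   to Y-variables are irrelevant for formulas in BF(X) *)
Definition evalX (tau : 'I_n -> bool) (phi : form) : bool :=
  eval (fun v => if v is inl x then tau x else false) phi.

Definition act_X (g : form -> form) (tau : 'I_n -> bool) : 'I_n -> bool :=
  fun x => evalX tau (g (FVar (inl x))).

Definition assoc_group (G : (form -> form) -> Prop) (f : interp -> interp) : Prop :=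
  bijective f /\
  forall (s : interp) (tau : 'I_n -> bool), exists2 g, G g &
    forall v, ext (act_X g tau) (f s) v = act_asg g (ext tau s) v.

Definition agree_on (A : {set 'I_n}) (tau sigma : 'I_n -> bool) : Prop :=
  forall x, x \in A -> tau x = sigma x.

End Defs.

From HB Require Import structures.
From mathcomp Require Import all_boot perm.
From Stdlib Require Import Classical FunctionalExtensionality.

Set Implicit Arguments. Unset Strict Implicit. Unset Printing Implicit Defensive.

(* Let A be the set of assignments agreeing with sigma on D_i; by (2) it is
   invariant under G_syn.  The interpretation s' takes the values of f(s) on A
   and those of s off A.  This is a legitimate interpretation because, by (1),
   s and f(s) can differ on A only at those y_j with D_i \subset D_j, and the
   arguments of such a y_j decide membership in A.  The transposition of s and
   s' then lies in G_sem: on A it acts like f at s and like f^-1 at s', off A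
   like the identity; f^-1 is realised by G_syn because it is an iterate of f,
   there being finitely many interpretations. *)

Section FiniteInterp.
Variables (n k : nat) (D : 'I_k -> {set 'I_n}).

Definition ffun_of_interp (t : interp D) :
  {dffun forall j : 'I_k, {ffun {ffun dom D j -> bool} -> bool}} := [ffun j => t j].

Definition interp_of_ffun
  (e : {dffun forall j : 'I_k, {ffun {ffun dom D j -> bool} -> bool}}) : interp D :=
  fun j => e j.

Lemma ffun_of_interpK : cancel ffun_of_interp interp_of_ffun.
Proof.
by move=> t; apply: functional_extensionality_dep => j; rewrite /interp_of_ffun ffunE.
Qed.

End FiniteInterp.

HB.instance Definition _ n k (D : 'I_k -> {set 'I_n}) :=
  Finite.copy (interp D) (can_type (@ffun_of_interpK n k D)).

Section Realization.
Variables (n k : nat) (D : 'I_k -> {set 'I_n}).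
Implicit Types (g : form n k -> form n k) (tau : 'I_n -> bool) (t : interp D).

Lemma eval_onX (phi : form n k) (r1 r2 : var n k -> bool) :
  vars_in (@isX n k) phi -> (forall x, r1 (inl x) = r2 (inl x)) -> eval r1 phi = eval r2 phi.
Proof.
move=> + r12; elim: phi => [[x|j]| | |a IHa|a IHa b IHb|a IHa b IHb] //=.
- by move/IHa ->.
- by case/andP=> /IHa -> /IHb ->.
- by case/andP=> /IHa -> /IHb ->.
Qed.

Lemma act_XE g tau t :
  admissible D g -> act_X g tau = fun x => act_asg g (ext tau t) (inl x).
Proof.
by case=> _ _ gX _ _; apply: functional_extensionality => x; apply: eval_onX.
Qed.

Lemma act_X_id tau : act_X (id : form n k -> form n k) tau = tau.
Proof. exact: functional_extensionality. Qed.

Lemma act_asg_comp g1 g2 rho :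
  preserves_sat g2 -> act_asg (g2 \o g1) rho = act_asg g1 (act_asg g2 rho).
Proof. by move=> g2_sat; apply: functional_extensionality => v; apply: g2_sat. Qed.

Definition realized_by (G : (form n k -> form n k) -> Prop) (F : interp D -> interp D) :=
  forall t tau, exists2 g, G g & ext (act_X g tau) (F t) = act_asg g (ext tau t).

Lemma assoc_groupP G f : assoc_group G f <-> bijective f /\ realized_by G f.
Proof.
split=> -[f_bij fG]; split=> // t tau; have [g Gg fgE] := fG t tau; exists g => //.
- exact: functional_extensionality.
- by move=> v; rewrite fgE.
Qed.

Variable G : (form n k -> form n k) -> Prop.
Hypothesis G_adm : admissible_group D G.

Lemma realized_by_id : realized_by G id.
Proof. by case: G_adm => _ Gid _ _ t tau; exists id; rewrite ?act_X_id. Qed.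

Lemma realized_by_comp F1 F2 :
  realized_by G F1 -> realized_by G F2 -> realized_by G (F1 \o F2).
Proof.
case: G_adm => Gadm _ Gcomp _ F1G F2G t tau.
have [g2 Gg2 E2] := F2G t tau.
have [g1 Gg1 E1] := F1G (F2 t) (act_X g2 tau).
have g2_sat : preserves_sat g2 by case: (Gadm _ Gg2).
have act_X_comp : act_X (g2 \o g1) tau = act_X g1 (act_X g2 tau).
  rewrite (act_XE _ t (Gadm _ (Gcomp _ _ Gg2 Gg1))) act_asg_comp // -E2.
  by rewrite -(act_XE _ _ (Gadm _ Gg1)).
by exists (g2 \o g1); [exact: Gcomp | rewrite /= act_X_comp E1 E2 act_asg_comp].
Qed.

Lemma realized_by_iter F m : realized_by G F -> realized_by G (iter m F).
Proof.
move=> FG; elim: m => [|m IHm]; first exact: realized_by_id.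
exact: realized_by_comp FG IHm.
Qed.

Lemma realized_by_finv F : realized_by G F -> realized_by G (finv F).
Proof. by move=> FG t; apply: (realized_by_iter (order F t).-1 FG). Qed.

Variables (f : interp D -> interp D) (s s' : interp D) (A : ('I_n -> bool) -> Prop).
Hypotheses (f_sem : assoc_group G f)
  (A_inv : forall g tau, G g -> A tau -> A (act_X g tau))
  (s'_on : forall tau, A tau -> ext tau s' = ext tau (f s))
  (s'_off : forall tau, ~ A tau -> ext tau s' = ext tau s).

Lemma assoc_group_tperm : assoc_group G (tperm s s').
Proof.
have [f_bij fG] := (assoc_groupP G f).1 f_sem.
apply/assoc_groupP; split; first exact: (inv_bij (@tpermK _ s s')).
move=> t tau; case: (classic (A tau)) => [Atau | nAtau]; last first.
  by exists id; [case: G_adm | rewrite act_X_id; case: tpermP => [->|->|//]; rewrite s'_off].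
case: tpermP => [-> | -> | _ _]; last exact: realized_by_id.
- have [g Gg E] := fG s tau.
  by exists g => //; rewrite s'_on ?E //; apply: A_inv.
- have [g Gg E] := realized_by_finv fG (f s) tau.
  exists g => //; rewrite s'_on // -E finv_f //; exact: bij_inj.
Qed.

End Realization.

Section Patch.
Variables (n k : nat) (D : 'I_k -> {set 'I_n}) (A : {set 'I_n}) (sigma : 'I_n -> bool).

Definition agrees_on_dom j (a : {ffun dom D j -> bool}) : bool :=
  [forall x : dom D j, (val x \in A) ==> (a x == sigma (val x))].

Lemma agrees_on_domP j tau :
  A \subset D j -> reflect (agree_on A tau sigma) (agrees_on_dom (restr D tau j)).
Proof.
move=> sAD; apply: (iffP forallP) => [agr x xA | agr x].
- by have /implyP/(_ xA) := agr (exist _ x (subsetP sAD x xA)); rewrite ffunE => /eqP.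
- by apply/implyP => xA; rewrite ffunE agr.
Qed.

(* On the arguments of y_j, take the value of t if they agree with sigma on A
   (decidable only when A \subset D_j), and the value of s otherwise. *)
Definition patch (s t : interp D) : interp D :=
  fun j => [ffun a => if (A \subset D j) && agrees_on_dom a then t j a else s j a].

Lemma ext_patch_off s t tau :
  ~ agree_on A tau sigma -> ext tau (patch s t) = ext tau s.
Proof.
move=> nagr; apply: functional_extensionality => -[x|j] //=; rewrite ffunE.
case: (boolP (A \subset D j)) => //= sAD.
by case: (agrees_on_domP tau sAD).
Qed.

Lemma ext_patch_on s t tau :
  (forall j, ~~ (A \subset D j) -> ext tau s (inr j) = ext tau t (inr j)) ->
  agree_on A tau sigma -> ext tau (patch s t) = ext tau t.
Proof.
move=> st_eq agr; apply: functional_extensionality => -[x|j] //=; rewrite ffunE.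
case: (boolP (A \subset D j)) => [sAD | nsAD] /=; last exact: st_eq.
by rewrite (introT (agrees_on_domP tau sAD) agr).
Qed.

End Patch.

Theorem lemma6 (n k : nat) (D : 'I_k -> {set 'I_n})
  (Gsyn : (form n k -> form n k) -> Prop)
  (HG : admissible_group D Gsyn)
  (sigma : 'I_n -> bool) (f : interp D -> interp D) (s : interp D) (i : 'I_k)
  (Hf : assoc_group Gsyn f)
  (H1 : forall j : 'I_k, (j < i)%N \/ ~~ (D i \subset D j) ->
        forall tau : 'I_n -> bool, agree_on (D i) tau sigma ->
        ext tau s (inr j) = ext tau (f s) (inr j))
  (H2 : forall g, Gsyn g -> forall tau : 'I_n -> bool,
        agree_on (D i) tau sigma -> agree_on (D i) (act_X g tau) tau) :
  exists s' : interp D,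
    (forall (j : 'I_k) (tau : 'I_n -> bool),
       ((j < i)%N \/ ((i <= j)%N /\ ~ agree_on (D i) tau sigma)) ->
       ext tau s' (inr j) = ext tau s (inr j)) /\
    (forall (j : 'I_k) (tau : 'I_n -> bool),
       (i <= j)%N -> agree_on (D i) tau sigma ->
       ext tau s' (inr j) = ext tau (f s) (inr j)) /\
    (exists2 h, assoc_group Gsyn h & h s = s').
Proof.
pose s' := patch (D i) sigma s (f s).
have s'_off tau : ~ agree_on (D i) tau sigma -> ext tau s' = ext tau s.
  exact: ext_patch_off.
have s'_on tau : agree_on (D i) tau sigma -> ext tau s' = ext tau (f s).
  by move=> agr; apply: ext_patch_on => // j nsub; apply: H1 => //; right.
exists s'; split; [|split].
- move=> j tau [lt_ji | [_ nagr]]; last by rewrite s'_off.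
  case: (classic (agree_on (D i) tau sigma)) => [agr | nagr]; last by rewrite s'_off.
  by rewrite s'_on // H1 //; left.
- by move=> j tau _ agr; rewrite s'_on.
- exists (tperm s s' : interp D -> interp D); last exact: tpermL.
  apply: (assoc_group_tperm HG Hf _ s'_on s'_off) => g tau Gg agr x xDi.
  by rewrite (H2 g Gg tau agr x xDi); apply: agr.
Qed.
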